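(* Under the hypotheses of the previous statement (a connected hypergraph $\mathcal{H}=(\mathcal{V},\mathcal{E})$ with vertex $w$ and proper subsets $\mathcal{V}_1,\mathcal{V}_2$ of $\mathcal{V}$, $\mathcal{V}_1\cup\mathcal{V}_2=\mathcal{V}$, $\mathcal{V}_1\cap\mathcal{V}_2=\{w\}$, every edge containing $w$ or contained in some $\mathcal{V}_i$), let $\mathcal{I}'_{(\mathcal{V}_1,\mathcal{V}_2)}(\mathcal{H})$ be the set of those $\mathcal{V}_0\in\mathcal{I}(\mathcal{H})$ such that $\mathcal{V}_i\subseteq\mathcal{V}_0$ for some $i\in\{1,2\}$ and $\mathcal{H}-\mathcal{V}_0$ is connected. Then $(\lambda-1)^2$ divides $P(\mathcal{H},\lambda)$ if and only if $\lambda^2$ divides $\sum_{\mathcal{V}_0\in\mathcal{I}'_{(\mathcal{V}_1,\mathcal{V}_2)}(\mathcal{H})}P(\mathcal{H}-\mathcal{V}_0,\lambda)$.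
   Context: A hypergraph $\mathcal{H}=(\mathcal{V},\mathcal{E})$ consists of a finite vertex set $\mathcal{V}$ and a set $\mathcal{E}$ of subsets of $\mathcal{V}$, each of size at least $1$, called edges. For a positive integer $\lambda$, a weak proper $\lambda$-colouring of $\mathcal{H}$ is a map $\phi:\mathcal{V}\to\{1,\dots,\lambda\}$ such that $|\{\phi(v):v\in e\}|>1$ for every $e\in\mathcal{E}$. $P(\mathcal{H},\lambda)$ denotes the number of weak proper $\lambda$-colourings; it is a polynomial in $\lambda$. $\mathcal{H}$ is connected if for any two vertices $v_1,v_2$ there is a sequence of edges $e_0,\dots,e_k$ with $v_1\in e_0$, $v_2\in e_k$, $e_i\cap e_{i+1}\ne\emptyset$. For $\mathcal{V}_0\subseteq\mathcal{V}$, $\mathcal{H}[\mathcal{V}_0]$ has vertex set $\mathcal{V}_0$ and edge set $\{e\in\mathcal{E}:e\subseteq\mathcal{V}_0\}$; $\mathcal{H}-\mathcal{V}_0=\mathcal{H}[\mathcal{V}\setminus\mathcal{V}_0]$; $\mathcal{I}(\mathcal{H})$ is the set of subsets $\mathcal{V}_0\subseteq\mathcal{V}$ such that $\mathcal{H}[\mathcal{V}_0]$ has no edges. *)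

From HB Require Import structures.
From mathcomp Require Import all_boot all_order all_algebra.
From Stdlib Require Import ClassicalEpsilon.
Set Implicit Arguments. Unset Strict Implicit. Unset Printing Implicit Defensive.
Import Order.TTheory GRing.Theory Num.Theory.

Record hypergraph (T : finType) := Hypergraph {
  hverts : {set T};
  hedges : {set {set T}} }.

Definition wf_hypergraph (T : finType) (H : hypergraph T) : Prop :=
  forall e, e \in hedges H -> e \subset hverts H /\ e != set0.

Definition weak_proper (T : finType) (H : hypergraph T) (n : nat)
    (f : {ffun {x : T | x \in hverts H} -> 'I_n}) : bool :=
  [forall e in hedges H,
     1 < #|[set f x | x : {x : T | x \in hverts H} & val x \in e]|].

Definition ncol (T : finType) (H : hypergraph T) (n : nat) : nat :=
  #|[set f : {ffun {x : T | x \in hverts H} -> 'I_n} | weak_proper f]|.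

Definition is_chrom_poly (T : finType) (H : hypergraph T) (p : {poly rat}) : Prop :=
  forall n : nat, (0 < n)%N -> (p.[n%:R] = (ncol H n)%:R)%R.

Definition chrom_poly (T : finType) (H : hypergraph T) : {poly rat} :=
  epsilon (inhabits (0 : {poly rat})%R) (is_chrom_poly H).

Definition connected (T : finType) (H : hypergraph T) : Prop :=
  forall v1 v2, v1 \in hverts H -> v2 \in hverts H ->
    v1 = v2 \/
    exists (e0 : {set T}) (s : seq {set T}),
      [/\ e0 \in hedges H, all (fun e => e \in hedges H) s,
          v1 \in e0, v2 \in last e0 s &
          path (fun a b => a :&: b != set0) e0 s].

Definition induced (T : finType) (H : hypergraph T) (V0 : {set T}) : hypergraph T :=
  Hypergraph V0 [set e in hedges H | e \subset V0].

Definition hdelete (T : finType) (H : hypergraph T) (V0 : {set T}) : hypergraph T :=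
  induced H (hverts H :\: V0).

Definition indep (T : finType) (H : hypergraph T) (V0 : {set T}) : bool :=
  (V0 \subset hverts H) && [forall e in hedges H, ~~ (e \subset V0)].

Definition asbool (P : Prop) : bool :=
  if excluded_middle_informative P then true else false.

(* Colouring a hypergraph with [n + 1] colours amounts to choosing the class
   [V0] of the last colour, which is independent, and a weak proper
   [n]-colouring of [H - V0]; by symmetry of the colours, exactly a fraction
   [1/(n+1)] of the colourings give the last colour to a fixed vertex [w].
   Hence P(H, l + 1) = (l + 1) * S(l) with S = sum of P(H - V0) over the
   independent V0 containing [w]; this recursion also shows that P(H, .) is a
   polynomial.  As [l + 1] is coprime to [l^2], (l - 1)^2 | P(H, l) iff
   l^2 | S(l).  A term of S outside I' has H - V0 disconnected: either by
   definition of I', or because H - V0 then splits along V1 and V2 at the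
   deleted vertex [w].  The chromatic polynomial of a disjoint union is the
   product of those of the parts, each vanishing at 0, so l^2 divides it. *)

From HB Require Import structures.
From mathcomp Require Import all_boot all_order all_algebra all_fingroup.
From Stdlib Require Import Classical ClassicalEpsilon.
Import Order.TTheory GRing.Theory Num.Theory.
Set Implicit Arguments. Unset Strict Implicit. Unset Printing Implicit Defensive.

Lemma card_imset_gt1P (A B : finType) (g : A -> B) (e : {set A}) :
  reflect (exists x y, [/\ x \in e, y \in e & g x != g y]) (1 < #|g @: e|).
Proof.
apply: (iffP card_gt1P) => [[_ [_ [/imsetP [x xe ->] /imsetP [y ye ->] gxy]]]|].
  by exists x, y.
by move=> [x [y [xe ye gxy]]]; exists (g x), (g y); rewrite !imset_f.
Qed.

Section Colourings.
Variable T : finType.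
Implicit Types (G : hypergraph T) (A B : {set T}).

Lemma wf_induced G A : wf_hypergraph G -> wf_hypergraph (induced G A).
Proof. by move=> wf e; rewrite inE => /andP [/wf [_ e0] eA]. Qed.

Lemma wf_hdelete G (V0 : {set T}) : wf_hypergraph G -> wf_hypergraph (hdelete G V0).
Proof. exact: wf_induced. Qed.

(* Colourings are extended by [None] off the vertex set, so that the colourings
   of all subhypergraphs of [G] live in the same finite type. *)
Definition colourings G (n : nat) : {set {ffun T -> option 'I_n}} :=
  [set g : {ffun T -> option 'I_n} | [forall x, (g x == None) == (x \notin hverts G)]
     && [forall e in hedges G, 1 < #|[set g x | x in e]|]].

Lemma colouringsP G n (g : {ffun T -> option 'I_n}) : reflect
  ((forall x, (g x == None) = (x \notin hverts G)) /\
   (forall e, e \in hedges G -> 1 < #|[set g x | x in e]|)) (g \in colourings G n).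
Proof.
rewrite inE; apply: (iffP andP) => [[/forallP dom /forall_inP edges]|[dom edges]].
  by split=> [x|//]; apply: eqP (dom x).
by split; [apply/forallP=> x; rewrite dom | apply/forall_inP].
Qed.

Definition extend_colouring G n (f : {ffun {x : T | x \in hverts G} -> 'I_n}) :
    {ffun T -> option 'I_n} :=
  [ffun x => if insub x is Some y then Some (f y) else None].

Lemma extend_colouring_val G n f (y : {x : T | x \in hverts G}) :
  @extend_colouring G n f (val y) = Some (f y).
Proof. by rewrite ffunE valK. Qed.

Lemma extend_colouring_out G n f x :
  x \notin hverts G -> @extend_colouring G n f x = None.
Proof. by move=> xV; rewrite ffunE insubF //; apply/negbTE. Qed.

Lemma extend_colouring_inj G n : injective (@extend_colouring G n).
Proof.
move=> f1 f2 ef; apply/ffunP => y.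
have := congr1 (fun g : {ffun T -> option 'I_n} => g (val y)) ef.
by rewrite !extend_colouring_val => -[].
Qed.

Lemma extend_colouring_imset G n f (e : {set T}) : e \subset hverts G ->
  [set @extend_colouring G n f x | x in e] =
  Some @: [set f y | y : {x : T | x \in hverts G} & val y \in e].
Proof.
move=> eV; apply/setP => o; apply/imsetP/imsetP => [[x xe ->]|[c]].
  have xV : x \in hverts G := subsetP eV x xe.
  by exists (f (Sub x xV)); rewrite -?extend_colouring_val ?imset_f ?inE.
by case/imsetP => y; rewrite inE => ye -> ->; exists (val y); rewrite ?extend_colouring_val.
Qed.

Definition unSome (A : eqType) (o : option A) : o != None -> A :=
  if o is Some a return o != None -> A then fun=> a else fun h => False_rect _ (notF h).

Lemma unSomeK (A : eqType) (o : option A) (h : o != None) : Some (unSome h) = o.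
Proof. by case: o h. Qed.

Lemma ncolE G n : wf_hypergraph G -> ncol G n = #|colourings G n|.
Proof.
move=> wf; have card_Some f e : e \in hedges G ->
    #|[set @extend_colouring G n f x | x in e]| =
    #|[set f y | y : {x : T | x \in hverts G} & val y \in e]|.
  by move=> /wf [eV _]; rewrite extend_colouring_imset // card_imset //; apply: Some_inj.
suff -> : colourings G n = @extend_colouring G n @: [set f | weak_proper f].
  by rewrite card_imset //; apply: extend_colouring_inj.
apply/setP => g; apply/idP/imsetP => [/colouringsP [dom edges]|[f]].
  have gV (y : {x : T | x \in hverts G}) : g (val y) != None by rewrite dom (valP y).
  pose f := [ffun y => unSome (gV y)].
  have eg : g = extend_colouring f.
    apply/ffunP => x; case: (boolP (x \in hverts G)) => xV.
      rewrite -[x]/(val (Sub x xV : {x : T | x \in hverts G})).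
      by rewrite extend_colouring_val ffunE unSomeK.
    by rewrite extend_colouring_out //; apply/eqP; rewrite dom.
  exists f => //; rewrite inE; apply/forall_inP => e he.
  by rewrite -card_Some // -eg; apply: edges.
rewrite inE => /forall_inP wp ->; apply/colouringsP; split=> [x|e he].
  case: (boolP (x \in hverts G)) => xV; last by rewrite extend_colouring_out.
  by rewrite -[x]/(val (Sub x xV : {x : T | x \in hverts G})) extend_colouring_val.
by rewrite card_Some //; apply: wp.
Qed.

Lemma card_colourings0 G : hverts G != set0 -> #|colourings G 0| = 0.
Proof.
case/set0Pn => v vV; apply/eqP; rewrite cards_eq0; apply/set0Pn => -[g /colouringsP [dom _]].
by move: (dom v); rewrite vV; case: (g v) => [[]|].
Qed.

Lemma card_colourings_set0 G n :
  wf_hypergraph G -> hverts G = set0 -> #|colourings G n| = 1.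
Proof.
move=> wf V0; apply/eqP/cards1P; exists [ffun=> None]; apply/setP => g.
rewrite [in RHS]inE; apply/idP/eqP => [/colouringsP [dom _]|->].
  by apply/ffunP => x; rewrite ffunE; apply/eqP; rewrite dom V0 inE.
apply/colouringsP; split=> [x|e /wf [eV e0]]; first by rewrite ffunE V0 inE.
by move: eV e0; rewrite V0 subset0 => /eqP ->; rewrite eqxx.
Qed.

Definition top_class n (g : {ffun T -> option 'I_n.+1}) : {set T} :=
  [set x | g x == Some ord_max].

Definition widen_colour n (o : option 'I_n) : option 'I_n.+1 :=
  omap (widen_ord (leqnSn n)) o.

Definition narrow_colour n (o : option 'I_n.+1) : option 'I_n :=
  obind (fun c : 'I_n.+1 => insub (val c)) o.

Lemma widen_colour_inj n : injective (@widen_colour n).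
Proof. by move=> [c1|] [c2|] //= [] /val_inj ->. Qed.

Lemma widen_colour_top n (o : option 'I_n) : (widen_colour o == Some ord_max) = false.
Proof. by case: o => [c|] //=; rewrite (inj_eq Some_inj) -val_eqE /= ltn_eqF. Qed.

Lemma narrow_colourK n (o : option 'I_n.+1) :
  o != Some ord_max -> widen_colour (narrow_colour o) = o.
Proof.
case: o => [c|] //; rewrite (inj_eq Some_inj) -val_eqE /= => cn.
have c_lt : c < n by rewrite ltn_neqAle cn -ltnS ltn_ord.
by rewrite /narrow_colour /= insubT /=; congr Some; apply: val_inj.
Qed.

Lemma widen_colourK n : cancel (@widen_colour n) (@narrow_colour n).
Proof. by move=> [c|] //=; rewrite insubT //= => ?; congr Some; apply: val_inj. Qed.

Lemma narrow_colour_eqNone n (o : option 'I_n.+1) :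
  (narrow_colour o == None) = (o == None) || (o == Some ord_max).
Proof.
case: o => [c|] //=; rewrite (inj_eq Some_inj) -val_eqE /=.
case: insubP => [u c_lt _|]; first by rewrite ltn_eqF.
by rewrite /= -ltnS ltn_neqAle ltn_ord andbT negbK.
Qed.

Lemma top_class_indep G n (g : {ffun T -> option 'I_n.+1}) :
  g \in colourings G n.+1 -> indep G (top_class g).
Proof.
move=> /colouringsP [dom edges]; apply/andP; split.
  apply/subsetP => x; rewrite inE => /eqP gx.
  by move: (dom x); rewrite gx => /esym /negbFE.
apply/forall_inP => e he; apply/negP => /subsetP top_e.
have /card_imset_gt1P [x [y [xe ye]]] := edges e he.
by move: (top_e x xe) (top_e y ye); rewrite !inE => /eqP -> /eqP ->; rewrite eqxx.
Qed.

Definition paint_top n (V0 : {set T}) (h : {ffun T -> option 'I_n}) :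
    {ffun T -> option 'I_n.+1} :=
  [ffun x => if x \in V0 then Some ord_max else widen_colour (h x)].

Definition erase_top n (g : {ffun T -> option 'I_n.+1}) : {ffun T -> option 'I_n} :=
  [ffun x => narrow_colour (g x)].

Lemma top_class_paint_top n V0 (h : {ffun T -> option 'I_n}) :
  top_class (paint_top V0 h) = V0.
Proof.
by apply/setP => x; rewrite !inE ffunE; case: (x \in V0); rewrite ?eqxx ?widen_colour_top.
Qed.

Lemma erase_topK n (g : {ffun T -> option 'I_n.+1}) :
  paint_top (top_class g) (erase_top g) = g.
Proof.
apply/ffunP => x; rewrite !ffunE inE.
by case: eqP => [-> //|/eqP gx]; rewrite narrow_colourK.
Qed.

Lemma paint_topK G n V0 (h : {ffun T -> option 'I_n}) :
  h \in colourings (hdelete G V0) n -> erase_top (paint_top V0 h) = h.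
Proof.
move=> /colouringsP [dom _]; apply/ffunP => x; rewrite !ffunE.
case: ifP => xV0; last exact: widen_colourK.
have /eqP -> : h x == None by rewrite dom !inE xV0.
by apply/eqP; rewrite narrow_colour_eqNone eqxx orbT.
Qed.

Lemma erase_top_colouring G n (g : {ffun T -> option 'I_n.+1}) :
  g \in colourings G n.+1 -> erase_top g \in colourings (hdelete G (top_class g)) n.
Proof.
move=> /colouringsP [dom edges]; apply/colouringsP; split=> [x|e].
  by rewrite ffunE !inE narrow_colour_eqNone dom negb_and negbK orbC.
rewrite inE => /andP [he /subsetP eV]; apply/card_imset_gt1P.
have /card_imset_gt1P [x [y [xe ye gxy]]] := edges e he; exists x, y; split=> //.
move: (eV x xe) (eV y ye); rewrite !inE !ffunE => /andP [xtop _] /andP [ytop _].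
by apply: contra gxy => /eqP exy; rewrite -(narrow_colourK xtop) -(narrow_colourK ytop) exy.
Qed.

Lemma paint_top_colouring G n V0 (h : {ffun T -> option 'I_n}) :
    wf_hypergraph G -> indep G V0 -> h \in colourings (hdelete G V0) n ->
  paint_top V0 h \in colourings G n.+1.
Proof.
move=> wf /andP [V0V /forall_inP V0_indep] /colouringsP [dom edges].
apply/colouringsP; split=> [x|e he].
  rewrite ffunE; case: (boolP (x \in V0)) => [/(subsetP V0V) -> //|xV0].
  by move: (dom x); rewrite !inE xV0; case: (h x).
apply/card_imset_gt1P; case: (boolP (e \in hedges (hdelete G V0))) => [he'|].
  have /card_imset_gt1P [x [y [xe ye hxy]]] := edges e he'; exists x, y; split=> //.
  move: he'; rewrite inE => /andP [_ /subsetP eV].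
  move: (eV x xe) (eV y ye); rewrite !inE !ffunE => /andP [/negbTE -> _] /andP [/negbTE -> _].
  by rewrite (inj_eq (@widen_colour_inj n)).
rewrite inE he /= => /subsetPn [x xe]; rewrite inE negb_and negbK.
have [/subsetP eV _] := wf e he; rewrite eV //= orbF => xV0.
have /subsetPn [y ye yV0] := V0_indep e he.
by exists x, y; rewrite !ffunE xV0 (negbTE yV0) eq_sym widen_colour_top.
Qed.

Lemma card_colourings_top_class G n V0 : wf_hypergraph G -> indep G V0 ->
  #|[set g in colourings G n.+1 | top_class g == V0]| = #|colourings (hdelete G V0) n|.
Proof.
move=> wf V0_indep.
suff -> : [set g in colourings G n.+1 | top_class g == V0] =
          paint_top V0 @: colourings (hdelete G V0) n.
  by apply: card_in_imset; apply: can_in_inj; apply: paint_topK.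
apply/setP => g; rewrite inE; apply/andP/imsetP => [[gG /eqP <-]|[h hG ->]].
  by exists (erase_top g); rewrite ?erase_topK ?erase_top_colouring.
by rewrite top_class_paint_top paint_top_colouring.
Qed.

Lemma sum_card_colourings_hdelete G n (P : pred {set T}) : wf_hypergraph G ->
  \sum_(V0 : {set T} | indep G V0 && P V0) #|colourings (hdelete G V0) n| =
  #|[set g in colourings G n.+1 | P (top_class g)]|.
Proof.
move=> wf; rewrite -sum1_card (partition_big (@top_class n) (fun V0 => indep G V0 && P V0)).
  apply: eq_bigr => V0 /andP [V0_indep PV0].
  rewrite -card_colourings_top_class // -sum1_card; apply: eq_bigl => g; rewrite !inE.
  by case: eqP => [->|]; rewrite ?andbF ?PV0 ?andbT.
by move=> g; rewrite inE => /andP [gG ->]; rewrite top_class_indep.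
Qed.

Lemma card_colourings_at_le G n v (c c' : 'I_n) :
  #|[set g in colourings G n | g v == Some c]| <=
  #|[set g in colourings G n | g v == Some c']|.
Proof.
pose s := omap (tperm c c'); have s_inj : injective s.
  by move=> [a|] [b|] //= [] /perm_inj ->.
pose F (g : {ffun T -> option 'I_n}) := [ffun x => s (g x)].
have F_inj : injective F.
  by move=> g1 g2 /ffunP eF; apply/ffunP => x; have := eF x; rewrite !ffunE => /s_inj.
rewrite -(card_imset _ F_inj); apply: subset_leq_card; apply/subsetP => g' /imsetP [g].
rewrite inE => /andP [/colouringsP [dom edges] /eqP gv] ->.
rewrite inE ffunE gv /= tpermL eqxx andbT; apply/colouringsP; split=> [x|e he].
  by rewrite ffunE -dom; case: (g x).
have /card_imset_gt1P [x [y [xe ye gxy]]] := edges e he; apply/card_imset_gt1P.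
by exists x, y; rewrite !ffunE (inj_eq s_inj).
Qed.

Lemma card_colourings_top G n v : v \in hverts G ->
  #|colourings G n.+1| = n.+1 * #|[set g in colourings G n.+1 | g v == Some ord_max]|.
Proof.
move=> vV; rewrite -sum1_card.
rewrite (partition_big (fun g : {ffun T -> option 'I_n.+1} => odflt ord0 (g v)) predT) //=.
set K := #|_|; rewrite (eq_bigr (fun=> K)) ?sum_nat_const ?card_ord // => c _.
have -> : K = #|[set g in colourings G n.+1 | g v == Some c]|.
  by apply/eqP; rewrite eqn_leq !card_colourings_at_le.
rewrite -sum1_card; apply: eq_bigl => g; rewrite inE.
case: (boolP (g \in colourings G n.+1)) => //= /colouringsP [dom _].
by move: (dom v); rewrite vV; case: (g v).
Qed.

Lemma card_colourings_succ G n v : wf_hypergraph G -> v \in hverts G ->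
  #|colourings G n.+1| =
  n.+1 * \sum_(V0 : {set T} | indep G V0 && (v \in V0)) #|colourings (hdelete G V0) n|.
Proof.
move=> wf vV; rewrite sum_card_colourings_hdelete // (card_colourings_top n vV).
by congr (_ * _); apply/eq_card => g; rewrite !inE.
Qed.

Section DisjointUnion.
Variables (G : hypergraph T) (n : nat) (A B : {set T}).
Hypotheses (V_AB : hverts G = A :|: B) (disj_AB : [disjoint A & B])
  (E_AB : forall e, e \in hedges G -> (e \subset A) || (e \subset B)).

Definition restrict_colouring (C : {set T}) (g : {ffun T -> option 'I_n}) :
    {ffun T -> option 'I_n} :=
  [ffun x => if x \in C then g x else None].

Definition glue_colourings (p : {ffun T -> option 'I_n} * {ffun T -> option 'I_n}) :
    {ffun T -> option 'I_n} :=
  [ffun x => if x \in A then p.1 x else p.2 x].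

Let notin_A x : x \in B -> (x \in A) = false.
Proof. by move=> xB; apply: (disjointFl disj_AB). Qed.

Lemma restrict_colouringP (C : {set T}) g : C \subset hverts G -> g \in colourings G n ->
  restrict_colouring C g \in colourings (induced G C) n.
Proof.
move=> /subsetP CV /colouringsP [dom edges]; apply/colouringsP; split=> [x|e].
  by rewrite ffunE /=; case: ifP => // /CV; rewrite dom => ->.
rewrite inE => /andP [he /subsetP eC]; apply/card_imset_gt1P.
have /card_imset_gt1P [x [y [xe ye gxy]]] := edges e he.
by exists x, y; rewrite !ffunE !eC.
Qed.

Lemma glue_colouringsP p :
    p \in setX (colourings (induced G A) n) (colourings (induced G B) n) ->
  glue_colourings p \in colourings G n.
Proof.
case: p => g1 g2; rewrite inE /=.
move=> /andP [/colouringsP [dom1 edges1] /colouringsP [dom2 edges2]].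
apply/colouringsP; split=> [x|e he].
  by rewrite ffunE V_AB inE negb_or /=; case: ifP => xA; rewrite ?dom1 ?dom2 ?xA.
apply/card_imset_gt1P; case/orP: (E_AB he) => eC.
  have /card_imset_gt1P [x [y [xe ye gxy]]] : 1 < #|[set g1 x | x in e]|.
    by apply: edges1; rewrite inE he.
  by exists x, y; rewrite !ffunE /= !(subsetP eC).
have /card_imset_gt1P [x [y [xe ye gxy]]] : 1 < #|[set g2 x | x in e]|.
  by apply: edges2; rewrite inE he.
by exists x, y; rewrite !ffunE /= !notin_A ?(subsetP eC).
Qed.

Lemma restrict_glue_colourings p :
    p \in setX (colourings (induced G A) n) (colourings (induced G B) n) ->
  (restrict_colouring A (glue_colourings p), restrict_colouring B (glue_colourings p)) = p.
Proof.
case: p => g1 g2; rewrite inE /= => /andP [/colouringsP [dom1 _] /colouringsP [dom2 _]].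
congr pair; apply/ffunP => x; rewrite !ffunE /=.
  by case: (boolP (x \in A)) => xA; last by apply/esym/eqP; rewrite dom1.
case: (boolP (x \in B)) => [xB|xB]; first by rewrite notin_A.
by apply/esym/eqP; rewrite dom2.
Qed.

Lemma glue_restrict_colourings g : g \in colourings G n ->
  glue_colourings (restrict_colouring A g, restrict_colouring B g) = g.
Proof.
move=> /colouringsP [dom _]; apply/ffunP => x; rewrite !ffunE /=.
case: (boolP (x \in A)) => // xA; case: ifP => // xB; apply/esym/eqP.
by rewrite dom V_AB inE (negbTE xA) xB.
Qed.

Lemma card_colourings_disjoint_union :
  #|colourings G n| = #|colourings (induced G A) n| * #|colourings (induced G B) n|.
Proof.
have sub_V (C : {set T}) : C \subset A :|: B -> C \subset hverts G by rewrite V_AB.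
rewrite -cardsX; have <- : glue_colourings @: setX (colourings (induced G A) n)
    (colourings (induced G B) n) = colourings G n.
  apply/setP => g; apply/imsetP/idP => [[p pX ->]|gG]; first exact: glue_colouringsP.
  exists (restrict_colouring A g, restrict_colouring B g); last by rewrite glue_restrict_colourings.
  by rewrite inE !restrict_colouringP ?sub_V ?subsetUl ?subsetUr.
apply/card_in_imset/(can_in_inj (g := fun g => (restrict_colouring A g, restrict_colouring B g))).
exact: restrict_glue_colourings.
Qed.

End DisjointUnion.

End Colourings.

Local Open Scope ring_scope.

Lemma poly_eq_pos_nat (p q : {poly rat}) :
  (forall n : nat, (0 < n)%N -> p.[n%:R] = q.[n%:R]) -> p = q.
Proof.
move=> pq; apply/eqP; rewrite -subr_eq0; apply/negPn/negP => nz.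
pose rs := [seq i.+1%:R : rat | i <- iota 0 (size (p - q))].
have := max_poly_roots nz (rs := rs); rewrite size_map size_iota ltnn.
have -> : all (root (p - q)) rs.
  by apply/allP => _ /mapP [i _ ->]; rewrite rootE !hornerE pq // subrr.
have -> : uniq rs.
  by rewrite map_inj_uniq ?iota_uniq // => i j /eqP; rewrite eqr_nat => /eqP [].
by move/(_ isT isT).
Qed.

Lemma asboolP (P : Prop) : reflect P (asbool P).
Proof. by rewrite /asbool; case: excluded_middle_informative; constructor. Qed.

Lemma chrom_poly_eq (T : finType) (G : hypergraph T) (p : {poly rat}) :
  (forall n, p.[n%:R] = (ncol G n)%:R) -> chrom_poly G = p.
Proof.
move=> p_ncol; have : is_chrom_poly G (chrom_poly G).
  by apply: epsilon_spec; exists p => n _.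
by move=> chromG; apply: poly_eq_pos_nat => n n_gt0; rewrite chromG.
Qed.

Section ChromaticPolynomial.
Variable T : finType.
Implicit Types (G : hypergraph T) (v : T).

Definition sum_chrom_hdelete G v : {poly rat} :=
  \sum_(V0 : {set T} | indep G V0 && (v \in V0)) chrom_poly (hdelete G V0).

Lemma horner_chrom_rec G v : wf_hypergraph G -> v \in hverts G ->
    (forall V0, indep G V0 && (v \in V0) -> forall n,
       (chrom_poly (hdelete G V0)).[n%:R] = (ncol (hdelete G V0) n)%:R) ->
  forall n, ('X * (sum_chrom_hdelete G v \Po ('X - 1))).[n%:R] = (ncol G n)%:R.
Proof.
move=> wf vV chromE [|n].
  by rewrite hornerM hornerX mul0r ncolE // card_colourings0 //; apply/set0Pn; exists v.
rewrite hornerM horner_comp !hornerE -[k in k - 1]natr1 addrK horner_sum ncolE //.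
rewrite (card_colourings_succ _ wf vV) natrM natr_sum; congr (_ * _).
by apply: eq_bigr => V0 V0v; rewrite chromE // ncolE //; apply: wf_hdelete.
Qed.

Lemma chrom_polyE G : wf_hypergraph G ->
  forall n, (chrom_poly G).[n%:R] = (ncol G n)%:R.
Proof.
have [k] := ubnP #|hverts G|; elim: k G => // k IH G /ltnSE V_le wf.
have [V0|[v vV]] := set_0Vmem (hverts G).
  suff -> : chrom_poly G = 1 by move=> n; rewrite hornerE ncolE // card_colourings_set0.
  by apply: chrom_poly_eq => n; rewrite hornerE ncolE // card_colourings_set0.
have chrom_hdelete V0 : indep G V0 && (v \in V0) ->
    forall n, (chrom_poly (hdelete G V0)).[n%:R] = (ncol (hdelete G V0) n)%:R.
  move=> /andP [_ vV0]; apply: IH; last exact: wf_hdelete.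
  apply: leq_trans V_le; apply: proper_card; apply/properP; split; first exact: subsetDl.
  by exists v; rewrite // !inE vV0.
have chrom_rec := horner_chrom_rec wf vV chrom_hdelete.
by rewrite (chrom_poly_eq chrom_rec).
Qed.

Lemma chrom_poly_shift G v : wf_hypergraph G -> v \in hverts G ->
  chrom_poly G \Po ('X + 1) = ('X + 1) * sum_chrom_hdelete G v.
Proof.
move=> wf vV; rewrite (chrom_poly_eq (horner_chrom_rec wf vV _)); last first.
  by move=> V0 _; apply/chrom_polyE/wf_hdelete.
by rewrite comp_polyM comp_polyX -comp_polyA comp_polyB comp_polyX comp_polyC addrK comp_polyXr.
Qed.

Lemma dvdX_chrom_poly G : wf_hypergraph G -> hverts G != set0 -> 'X %| chrom_poly G.
Proof.
move=> wf V_neq0; have := chrom_polyE wf 0; rewrite ncolE // card_colourings0 //.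
by rewrite -[p in p %| _]subr0 -polyC0 dvdp_XsubCl rootE => ->.
Qed.

Lemma dvdX2_chrom_poly_disjoint_union G (A B : {set T}) : wf_hypergraph G ->
    hverts G = A :|: B -> [disjoint A & B] -> A != set0 -> B != set0 ->
    (forall e, e \in hedges G -> (e \subset A) || (e \subset B)) ->
  'X ^+ 2 %| chrom_poly G.
Proof.
move=> wf V_AB disj_AB A_neq0 B_neq0 E_AB.
have [wfA wfB] := (wf_induced (A := A) wf, wf_induced (A := B) wf).
have -> : chrom_poly G = chrom_poly (induced G A) * chrom_poly (induced G B).
  apply: chrom_poly_eq => n; rewrite hornerM !chrom_polyE // !ncolE //.
  by rewrite (card_colourings_disjoint_union n V_AB disj_AB E_AB) natrM.
by rewrite expr2; apply: dvdp_mul; apply: dvdX_chrom_poly.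
Qed.

Definition edge_chain G (v1 v2 : T) : Prop :=
  exists (e0 : {set T}) (s : seq {set T}),
    [/\ e0 \in hedges G, all (fun e => e \in hedges G) s,
        v1 \in e0, v2 \in last e0 s &
        path (fun a b => a :&: b != set0) e0 s].

Lemma edge_chain_rcons G v1 v2 v3 e : v1 = v2 \/ edge_chain G v1 v2 ->
  e \in hedges G -> v2 \in e -> v3 \in e -> edge_chain G v1 v3.
Proof.
move=> [<-|[e0 [s [he0 hs v1e0 v2s chain]]]] he v2e v3e; first by exists e, [::].
exists e0, (rcons s e); rewrite all_rcons he last_rcons rcons_path chain /=.
by split=> //; apply/set0Pn; exists v2; rewrite inE v2s.
Qed.

Lemma not_connected_split G : wf_hypergraph G -> ~ connected G ->
  exists A B, [/\ hverts G = A :|: B, [disjoint A & B], A != set0, B != set0 &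
    forall e, e \in hedges G -> (e \subset A) || (e \subset B)].
Proof.
move=> wf not_conn.
have [v1 [v2 [v1V v2V no_chain]]] : exists v1 v2,
    [/\ v1 \in hverts G, v2 \in hverts G & ~ (v1 = v2 \/ edge_chain G v1 v2)].
  apply: NNPP => none; apply: not_conn => v1 v2 v1V v2V.
  by apply: NNPP => no_chain; apply: none; exists v1, v2.
pose reach v := v1 = v \/ edge_chain G v1 v.
pose A := [set v in hverts G | asbool (reach v)].
have reach_edge e : e \in hedges G -> [exists a in e, a \in A] -> e \subset A.
  move=> he /exists_inP [a ae]; rewrite inE => /andP [_ /asboolP ra].
  apply/subsetP => b be; have [/subsetP eV _] := wf e he.
  by rewrite inE eV //; apply/asboolP; right; apply: edge_chain_rcons ra he ae be.
exists A, (hverts G :\: A); split.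
- by rewrite setDE setUIr setUCr setIT; apply/esym/setUidPr/subsetP => x /setIdP [].
- by rewrite disjoint_sym disjoints_subset subsetDr.
- by apply/set0Pn; exists v1; rewrite inE v1V; apply/asboolP; left.
- apply/set0Pn; exists v2; rewrite !inE v2V andbT.
  by apply/negP => /andP [_ /asboolP].
move=> e he; case: (boolP [exists a in e, a \in A]) => [/reach_edge -> //|/exists_inPn eA].
have [/subsetP eV _] := wf e he.
by apply/orP; right; apply/subsetP => b be; rewrite inE eA ?eV.
Qed.

Lemma dvdX2_chrom_poly_not_connected G : wf_hypergraph G -> ~ connected G ->
  'X ^+ 2 %| chrom_poly G.
Proof.
move=> wf /(not_connected_split wf) [A [B [V_AB disj_AB A_neq0 B_neq0 E_AB]]].
exact: dvdX2_chrom_poly_disjoint_union V_AB disj_AB A_neq0 B_neq0 E_AB.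
Qed.

End ChromaticPolynomial.

Lemma dvdp_shift (R : idomainType) (p : {poly R}) :
  (('X - 1) ^+ 2 %| p) = ('X ^+ 2 %| p \Po ('X + 1)).
Proof.
have comp_sqr (q r : {poly R}) : q ^+ 2 \Po r = (q \Po r) ^+ 2 by rewrite !expr2 comp_polyM.
have XsubK : ('X - 1) \Po ('X + 1) = 'X :> {poly R}.
  by rewrite comp_polyB comp_polyX comp_polyC addrK.
apply/idP/idP => [|/(dvdp_comp_poly ('X - 1))].
  by move/(dvdp_comp_poly ('X + 1)); rewrite comp_sqr XsubK.
by rewrite comp_sqr comp_polyX -polyC1 comp_polyXaddC_K.
Qed.

Lemma coprimep_X2_Xadd1 (R : idomainType) : coprimep ('X ^+ 2) ('X + 1 : {poly R}).
Proof.
have -> : 'X + 1 = 'X - (-1)%:P :> {poly R} by rewrite polyCN opprK.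
rewrite coprimep_pexpl // coprimep_XsubC.
by rewrite rootE hornerX oppr_eq0 oner_eq0.
Qed.

Section CutVertex.
Variables (T : finType) (H : hypergraph T) (w : T) (V1 V2 : {set T}).
Hypotheses (V1_V2 : V1 :|: V2 = hverts H) (V1_V2_w : V1 :&: V2 = [set w])
  (E_w : forall e, e \in hedges H -> [|| w \in e, e \subset V1 | e \subset V2]).

Lemma dvdX2_chrom_hdelete_cut (V0 : {set T}) : wf_hypergraph H ->
    w \in V0 -> ~~ (V1 \subset V0) -> ~~ (V2 \subset V0) ->
  'X ^+ 2 %| chrom_poly (hdelete H V0).
Proof.
move=> wf wV0 /subsetPn [x1 x1V1 x1V0] /subsetPn [x2 x2V2 x2V0].
pose D := hverts H :\: V0.
apply: (@dvdX2_chrom_poly_disjoint_union _ _ (D :&: V1) (D :&: V2)).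
- exact: wf_hdelete.
- by rewrite -setIUr V1_V2; apply/esym/setIidPl/subsetDl.
- rewrite -setI_eq0 setIACA setIid V1_V2_w; apply/eqP/setP => x.
  by rewrite !inE; case: eqP => [->|]; rewrite ?wV0 ?andbF.
- by apply/set0Pn; exists x1; rewrite !inE x1V1 x1V0 -V1_V2 inE x1V1.
- by apply/set0Pn; exists x2; rewrite !inE x2V2 x2V0 -V1_V2 inE x2V2 orbT.
move=> e; rewrite inE => /andP [he eD]; rewrite !subsetI eD /=.
have /negPf w_e : w \notin e by apply/negP => /(subsetP eD); rewrite inE wV0.
by have := E_w he; rewrite w_e.
Qed.

End CutVertex.

Theorem corollary5 (T : finType) (H : hypergraph T) (w : T) (V1 V2 : {set T}) :
  wf_hypergraph H ->
  connected H ->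
  w \in hverts H ->
  V1 \proper hverts H -> V2 \proper hverts H ->
  V1 :|: V2 = hverts H ->
  V1 :&: V2 = [set w] ->
  (forall e, e \in hedges H -> [|| w \in e, e \subset V1 | e \subset V2]) ->
  let I' := [set V0 : {set T} | indep H V0 && ((V1 \subset V0) || (V2 \subset V0))
                                & asbool (connected (hdelete H V0))] in
  (('X - 1) ^+ 2 %| chrom_poly H)%R =
  ('X ^+ 2 %| \sum_(V0 in I') chrom_poly (hdelete H V0))%R.
Proof.
move=> wf _ wV _ _ V1_V2 V1_V2_w E_w I'.
have w_sub (V0 : {set T}) : (V1 \subset V0) || (V2 \subset V0) -> w \in V0.
  have /setIP [wV1 wV2] : w \in V1 :&: V2 by rewrite V1_V2_w set11.
  by case/orP => /subsetP; apply.
rewrite dvdp_shift (chrom_poly_shift wf wV) (Gauss_dvdpr _ (coprimep_X2_Xadd1 _)).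
rewrite /sum_chrom_hdelete (bigID (mem I')) /= dvdp_addl; last first.
  apply: (big_ind (fun q => 'X ^+ 2 %| q)) => [||V0 /andP [/andP [V0_indep wV0] V0_notin]];
    [exact: dvdp0 | exact: dvdp_add |].
  case: (boolP ((V1 \subset V0) || (V2 \subset V0))) => [V0_sub|].
    apply: dvdX2_chrom_poly_not_connected; first exact: wf_hdelete.
    by move=> conn; move: V0_notin; rewrite inE V0_indep V0_sub; case: asboolP.
  by rewrite negb_or => /andP []; apply: (dvdX2_chrom_hdelete_cut V1_V2 V1_V2_w E_w wf wV0).
congr (_ %| _); apply: eq_bigl => V0; rewrite andbC.
by case: (boolP (V0 \in I')) => //; rewrite inE => /andP [/andP [-> /w_sub ->]].
Qed.
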